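(* Let $\kappa>0$, let $V:[0,1]\to\mathbb R$ be smooth, and let $\theta:[0,1]\to\mathbb R$ be smooth with $\theta>0$ on $(0,1)$, $\theta(0)=\theta(1)=0$, $\theta'(0)>0$, $\theta'(1)<0$. Let $(\lambda,w,z)$ be the continuous characteristic triple. Then $$w(x)z(x)=\frac1C\,\frac{w^2(x)e^{-2V(x)/\kappa}}{\theta(x)},\qquad x\in(0,1),$$ where $C=\int_0^1\frac{w^2(x)e^{-2V(x)/\kappa}}{\theta(x)}\,dx>0$.
   Context: The continuous characteristic triple $(\lambda,w,z)$ consists of the principal eigenvalue $\lambda$ and positive (on $(0,1)$) principal eigenfunctions of the problems $$-\tfrac\kappa2(\theta z)''-(\theta zV')'=\lambda z\ \text{on }(0,1),\quad \lim_{x\to0,1}\theta(x)z(x)=0,$$ $$-\tfrac\kappa2\theta w''+\theta V'w'=\lambda w\ \text{on }(0,1),\quad w(0)=w(1)=0,$$ normalised by $\int_0^1z\,dx=1$ and $\int_0^1wz\,dx=1$ (these principal eigenpairs exist and are unique up to normalisation). *)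

From Stdlib Require Import Reals Lra.
From Coquelicot Require Import Coquelicot.
Open Scope R_scope.

(* f is smooth (C^infinity); used for functions R -> R whose restriction to
   [0,1] is the paper's smooth function. *)
Definition smooth (f : R -> R) : Prop := forall (n : nat) (x : R), ex_derive_n f n x.

Definition in_open01 (x : R) : Prop := 0 < x < 1.

Definition w_eigen (k : R) (V th : R -> R) (mu : R) (w : R -> R) : Prop :=
  (forall x, in_open01 x -> ex_derive w x /\ ex_derive (Derive w) x) /\
  (forall x, in_open01 x ->
     - (k / 2) * th x * Derive (Derive w) x + th x * Derive V x * Derive w x
     = mu * w x) /\
  w 0 = 0 /\ w 1 = 0 /\
  filterlim w (at_right 0) (locally 0) /\ filterlim w (at_left 1) (locally 0).

Definition z_eigen (k : R) (V th : R -> R) (mu : R) (z : R -> R) : Prop :=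
  (forall x, in_open01 x ->
     ex_derive (fun y => th y * z y) x /\
     ex_derive (Derive (fun y => th y * z y)) x /\
     ex_derive (fun y => th y * z y * Derive V y) x) /\
  (forall x, in_open01 x ->
     - (k / 2) * Derive (Derive (fun y => th y * z y)) x
     - Derive (fun y => th y * z y * Derive V y) x
     = mu * z x) /\
  filterlim (fun y => th y * z y) (at_right 0) (locally 0) /\
  filterlim (fun y => th y * z y) (at_left 1) (locally 0).

Definition char_triple (k : R) (V th : R -> R) (lam : R) (w z : R -> R) : Prop :=
  w_eigen k V th lam w /\ z_eigen k V th lam z /\
  (forall x, in_open01 x -> 0 < w x /\ 0 < z x) /\
  (forall mu u, w_eigen k V th mu u -> (exists x, in_open01 x /\ u x <> 0) -> lam <= mu) /\
  (forall mu u, z_eigen k V th mu u -> (exists x, in_open01 x /\ u x <> 0) -> lam <= mu) /\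
  is_RInt_gen z (at_right 0) (at_left 1) 1 /\
  is_RInt_gen (fun x => w x * z x) (at_right 0) (at_left 1) 1.

From Stdlib Require Import Reals Lra.
From Coquelicot Require Import Coquelicot.
Open Scope R_scope.

(* Let P = th z, F = k/2 P' + P V' (the flux) and W = k/2 P w' - w F. The z-equation reads
   F' = - lam z, and together with the w-equation it makes W constant on (0,1). Near 0, F
   stays bounded because z is integrable, hence P = O(x) because P -> 0. If W were nonzero,
   k/2 P w' = W + w F ~ W would force |w'| >= c/x, so w would diverge logarithmically at 0,
   contradicting w(0+) = 0. Hence W = 0, which says that P / (w e^(-2V/k)) has zero
   derivative: th z = c w e^(-2V/k) with c > 0, and integrating
   w z = c w^2 e^(-2V/k) / th against int w z = 1 gives c = 1/C. *)

Lemma ball_Rabs (x y eps : R) : ball x eps y <-> Rabs (y - x) < eps.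
Proof. reflexivity. Qed.

Lemma at_right_interval (a : R) (Q : R -> Prop) :
  at_right a Q <-> exists d, 0 < d /\ forall t, a < t < a + d -> Q t.
Proof.
split.
- intros [d Hd]. exists d. split; [apply cond_pos|].
  intros t Ht. apply Hd; [apply ball_Rabs; rewrite Rabs_pos_eq|]; lra.
- intros [d [Hd HQ]]. exists (mkposreal d Hd). intros t Ht Hat.
  apply (proj1 (ball_Rabs a t d)), Rabs_lt_between in Ht. apply HQ. lra.
Qed.

Lemma at_left_interval (b : R) (Q : R -> Prop) :
  at_left b Q <-> exists d, 0 < d /\ forall t, b - d < t < b -> Q t.
Proof.
split.
- intros [d Hd]. exists d. split; [apply cond_pos|].
  intros t Ht. apply Hd; [apply ball_Rabs; rewrite Rabs_left|]; lra.
- intros [d [Hd HQ]]. exists (mkposreal d Hd). intros t Ht Htb.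
  apply (proj1 (ball_Rabs b t d)), Rabs_lt_between in Ht. apply HQ. lra.
Qed.

Lemma at_right_lt (a b : R) : a < b -> at_right a (fun t => a < t < b).
Proof. intros Hab. apply at_right_interval. exists (b - a). split; [lra | intros t Ht; lra]. Qed.

Lemma at_left_gt (a b : R) : a < b -> at_left b (fun t => a < t < b).
Proof. intros Hab. apply at_left_interval. exists (b - a). split; [lra | intros t Ht; lra]. Qed.

Lemma filterlim_Rabs_lt {T : Type} {F : (T -> Prop) -> Prop} {FF : Filter F}
  (f : T -> R) (l eps : R) :
  filterlim f F (locally l) -> 0 < eps -> F (fun t => Rabs (f t - l) < eps).
Proof.
intros Hf Heps. exact (proj1 (filterlim_locally f l) Hf (mkposreal eps Heps)).
Qed.

Lemma is_derive_0_const (f : R -> R) (a b : R) :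
  (forall x, a < x < b -> is_derive f x 0) ->
  forall x y, a < x < b -> a < y < b -> f x = f y.
Proof.
intros Hf x y Hx Hy.
assert (Hseg : forall t, Rmin x y <= t <= Rmax x y -> a < t < b).
{ intros t Ht. unfold Rmin, Rmax in Ht. destruct (Rle_dec x y); lra. }
destruct (MVT_gen f x y (fun _ => 0)) as [c [_ Hc]].
- intros t Ht. apply Hf, Hseg. lra.
- intros t Ht. apply continuity_pt_filterlim, (ex_derive_continuous f).
  exists 0. apply Hf, Hseg, Ht.
- lra.
Qed.

Lemma le_linear_at_right (p : R -> R) (a M : R) : 0 <= M ->
  filterlim p (at_right a) (locally 0) ->
  at_right a (fun t => ex_derive p t /\ Derive p t <= M) ->
  at_right a (fun t => p t <= M * (t - a)).
Proof.
intros HM Hp Hd.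
apply at_right_interval in Hd as [d [Hd HdP]].
apply at_right_interval. exists d. split; [exact Hd|]. intros x Hx.
apply Rnot_lt_le. intros Hpx.
assert (Hgap := filterlim_Rabs_lt p 0 ((p x - M * (x - a)) / 2) Hp ltac:(lra)).
apply at_right_interval in Hgap as [e [He Hgap]].
set (s := a + Rmin e (x - a) / 2).
assert (Hs : a < s < x /\ s < a + e).
{ assert (Rmin e (x - a) <= e) by apply Rmin_l.
  assert (Rmin e (x - a) <= x - a) by apply Rmin_r.
  assert (0 < Rmin e (x - a)) by (apply Rmin_pos; lra).
  unfold s. lra. }
assert (Hps := Hgap s ltac:(lra)). rewrite Rminus_0_r in Hps.
apply Rabs_lt_between in Hps.
destruct (MVT_gen p s x (Derive p)) as [c [Hc Hmvt]];
  unfold Rmin, Rmax in *; destruct (Rle_dec s x); try lra.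
- intros t Ht. apply Derive_correct, HdP. lra.
- intros t Ht. apply continuity_pt_filterlim, (ex_derive_continuous p), HdP. lra.
- destruct (HdP c ltac:(lra)) as [_ Hpc].
  assert (Derive p c * (x - s) <= M * (x - a)) by nra.
  lra.
Qed.

Lemma ln_growth (u : R -> R) (c x y : R) : 0 < x < y ->
  (forall t, x <= t <= y -> ex_derive u t /\ c / t <= Derive u t) ->
  c * (ln y - ln x) <= u y - u x.
Proof.
intros Hxy Hu.
assert (Hd : forall t, x <= t <= y ->
  is_derive (fun t => u t - c * ln t) t (Derive u t - c * / t)).
{ intros t Ht. apply (is_derive_minus u (fun t => c * ln t)).
  - apply Derive_correct, Hu, Ht.
  - apply (is_derive_scal ln), is_derive_ln. lra. }
destruct (MVT_gen (fun t => u t - c * ln t) x y (fun t => Derive u t - c * / t))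
  as [e [He Hmvt]]; unfold Rmin, Rmax in *; destruct (Rle_dec x y); try lra.
- intros t Ht. apply Hd. lra.
- intros t Ht. apply continuity_pt_filterlim, (ex_derive_continuous (fun t => u t - c * ln t)).
  eexists. apply Hd, Ht.
- destruct (Hu e He) as [_ Hue]. unfold Rdiv in Hue.
  assert (0 <= (Derive u e - c * / e) * (y - x)) by (apply Rmult_le_pos; lra).
  lra.
Qed.

Lemma not_filterlim_of_derive_ge_inv (u : R -> R) (c l : R) : 0 < c ->
  at_right 0 (fun t => ex_derive u t /\ c / t <= Derive u t) ->
  ~ filterlim u (at_right 0) (locally l).
Proof.
intros Hc Hu Hl.
destruct (proj1 (at_right_interval 0 _) (filter_and _ _ Hu (filterlim_Rabs_lt u l 1 Hl Rlt_0_1)))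
  as [d [Hd Hdu]].
(* on [y e^(-3/c), y] the lower bound c/t on u' makes u grow by 3 *)
set (y := d / 2). set (x := y * exp (- 3 / c)).
assert (Hexp : 0 < exp (- 3 / c) < 1).
{ split; [apply exp_pos|]. rewrite <- exp_0. apply exp_increasing.
  assert (0 < 3 / c) by (apply Rdiv_lt_0_compat; lra). unfold Rdiv in *. lra. }
assert (Hxy : 0 < x < y) by (unfold x, y; split; nra).
assert (Hgrowth : c * (ln y - ln x) = 3).
{ unfold x. rewrite ln_mult, ln_exp by lra. field. lra. }
assert (Hincr := ln_growth u c x y Hxy (fun t Ht => proj1 (Hdu t ltac:(unfold y in *; lra)))).
destruct (Hdu x ltac:(unfold y in *; lra)) as [_ Hux].
destruct (Hdu y ltac:(unfold y in *; lra)) as [_ Huy].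
apply Rabs_lt_between in Hux. apply Rabs_lt_between in Huy. lra.
Qed.

Lemma not_filterlim_of_weighted_derive_ge (u p : R -> R) (a M l : R) : 0 < a -> 0 < M ->
  at_right 0 (fun t => ex_derive u t /\ 0 < p t <= M * t /\ a <= p t * Derive u t) ->
  ~ filterlim u (at_right 0) (locally l).
Proof.
intros Ha HM Hu. apply (not_filterlim_of_derive_ge_inv u (a / M)); [apply Rdiv_lt_0_compat; lra|].
assert (Hpos : at_right 0 (fun t => 0 < t)) by (exists (mkposreal 1 Rlt_0_1); tauto).
eapply filter_imp; [|exact (filter_and _ _ Hu Hpos)].
intros t [[Hut [Hpt Hpu]] Ht]. split; [exact Hut|].
assert (0 < Derive u t) by nra.
unfold Rdiv. rewrite Rmult_assoc, <- Rinv_mult.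
apply Rle_div_l; [apply Rmult_lt_0_compat; lra|]. nra.
Qed.

Lemma is_RInt_le_is_RInt_gen (f : R -> R) (a b x c I J : R) :
  (forall t, a < t < b -> 0 <= f t) -> a < x <= c -> c < b ->
  is_RInt f x c J -> is_RInt_gen f (at_right a) (at_left b) I -> J <= I.
Proof.
intros Hf Hxc Hcb HJ HI. apply Rnot_lt_le. intros HIJ.
destruct (HI (ball I (mkposreal (J - I) ltac:(lra))) (locally_ball _ _)) as [Q R HQ HR HQR].
apply at_right_interval in HQ as [d1 [Hd1 HQ]].
apply at_left_interval in HR as [d2 [Hd2 HR]].
set (a' := a + Rmin d1 (x - a) / 2). set (b' := b - Rmin d2 (b - c) / 2).
assert (Ha' : a < a' < x /\ a' < a + d1).
{ assert (Rmin d1 (x - a) <= d1) by apply Rmin_l.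
  assert (Rmin d1 (x - a) <= x - a) by apply Rmin_r.
  assert (0 < Rmin d1 (x - a)) by (apply Rmin_pos; lra).
  unfold a'. lra. }
assert (Hb' : c < b' < b /\ b - d2 < b').
{ assert (Rmin d2 (b - c) <= d2) by apply Rmin_l.
  assert (Rmin d2 (b - c) <= b - c) by apply Rmin_r.
  assert (0 < Rmin d2 (b - c)) by (apply Rmin_pos; lra).
  unfold b'. lra. }
destruct (HQR a' b' (HQ a' ltac:(lra)) (HR b' ltac:(lra))) as [y [Hy Hball]].
simpl in Hy. apply (proj1 (ball_Rabs I y (J - I))), Rabs_lt_between in Hball.
assert (Hab' : ex_RInt f a' b') by (exists y; exact Hy).
assert (Hxb' : ex_RInt f x b') by (apply (ex_RInt_Chasles_2 f a'); [lra | exact Hab']).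
assert (Hsplit : RInt f a' b' = RInt f a' x + (RInt f x c + RInt f c b')).
{ rewrite <- (RInt_Chasles f a' x b'), <- (RInt_Chasles f x c b'); try reflexivity.
  - exists J; exact HJ.
  - apply (ex_RInt_Chasles_2 f x); [lra | exact Hxb'].
  - apply (ex_RInt_Chasles_1 f a' x b'); [lra | exact Hab'].
  - exact Hxb'. }
rewrite (is_RInt_unique f a' b' y Hy), (is_RInt_unique f x c J HJ) in Hsplit.
assert (0 <= RInt f a' x).
{ apply RInt_ge_0; [lra | apply (ex_RInt_Chasles_1 f a' x b'); [lra | exact Hab'] |].
  intros t Ht. apply Hf. lra. }
assert (0 <= RInt f c b').
{ apply RInt_ge_0; [lra | apply (ex_RInt_Chasles_2 f x); [lra | exact Hxb'] |].
  intros t Ht. apply Hf. lra. }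
lra.
Qed.

Lemma Rabs_le_of_is_derive_integrable (F f : R -> R) (s a b c I : R) :
  (forall t, a < t < b -> 0 <= f t) -> (forall t, a < t < b -> continuous f t) ->
  (forall t, a < t < b -> is_derive F t (s * f t)) ->
  is_RInt_gen f (at_right a) (at_left b) I -> a < c < b ->
  forall x, a < x <= c -> Rabs (F x) <= Rabs (F c) + Rabs s * I.
Proof.
intros Hf Hfc HF HI Hc x Hx.
assert (Hseg : forall t, Rmin x c <= t <= Rmax x c -> a < t < b).
{ intros t Ht. unfold Rmin, Rmax in Ht. destruct (Rle_dec x c); lra. }
destruct (ex_RInt_continuous f x c (fun t Ht => Hfc t (Hseg t Ht))) as [J HJ].
assert (HFJ : F c - F x = s * J).
{ transitivity (RInt (fun t => s * f t) x c).
  - symmetry. apply is_RInt_unique, (is_RInt_derive F (fun t => s * f t)).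
    + intros t Ht. apply HF, Hseg, Ht.
    + intros t Ht. apply (continuous_scal_r s f), Hfc, Hseg, Ht.
  - exact (is_RInt_unique _ x c _ (is_RInt_scal f x c s J HJ)). }
assert (0 <= J) by (apply (is_RInt_ge_0 f x c); [lra | exact HJ | intros t Ht; apply Hf; lra]).
assert (J <= I) by (apply (is_RInt_le_is_RInt_gen f a b x c); [exact Hf | lra | lra | exact HJ | exact HI]).
replace (F x) with (F c + - (s * J)) by lra.
eapply Rle_trans; [apply Rabs_triang|]. apply Rplus_le_compat_l.
rewrite Rabs_Ropp, Rabs_mult, (Rabs_pos_eq J) by lra.
apply Rmult_le_compat_l; [apply Rabs_pos | lra].
Qed.

Lemma is_RInt_gen_ext_scal (f g : R -> R) (a b c l : R) : a < b -> c <> 0 ->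
  (forall x, a < x < b -> f x = c * g x) ->
  is_RInt_gen f (at_right a) (at_left b) l -> is_RInt_gen g (at_right a) (at_left b) (l / c).
Proof.
intros Hab Hc Hfg Hf.
replace (l / c) with (scal (/ c) l) by (unfold scal; simpl; unfold mult; simpl; field; exact Hc).
apply (is_RInt_gen_ext (fun y => scal (/ c) (f y))); [|exact (is_RInt_gen_scal f (/ c) l Hf)].
exists (fun t => a < t < b) (fun t => a < t < b).
- exact (at_right_lt a b Hab).
- exact (at_left_gt a b Hab).
- intros x y Hx Hy t Ht. simpl in Ht.
  assert (a < t < b) by (unfold Rmin, Rmax in Ht; destruct (Rle_dec x y); lra).
  rewrite Hfg by assumption. unfold scal; simpl; unfold mult; simpl. field. exact Hc.
Qed.

Section CharacteristicTriple.

Variables (k : R) (V th : R -> R) (lam Iz : R) (w z : R -> R).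
Hypothesis k_pos : 0 < k.
Hypothesis V_derivable : forall x, ex_derive V x.
Hypothesis DV_continuous_0 : continuous (Derive V) 0.
Hypothesis th_derivable : forall x, in_open01 x -> ex_derive th x.
Hypothesis th_pos : forall x, in_open01 x -> 0 < th x.
Hypothesis w_eig : w_eigen k V th lam w.
Hypothesis z_eig : z_eigen k V th lam z.
Hypothesis w_pos : forall x, in_open01 x -> 0 < w x.
Hypothesis z_pos : forall x, in_open01 x -> 0 < z x.
Hypothesis z_integrable : is_RInt_gen z (at_right 0) (at_left 1) Iz.

Definition thz (x : R) : R := th x * z x.

Definition flux (x : R) : R := k / 2 * Derive thz x + thz x * Derive V x.

Definition wronskian (x : R) : R := k / 2 * thz x * Derive w x - w x * flux x.

Lemma z_continuous x : in_open01 x -> continuous z x.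
Proof.
intros Hx. apply (continuous_ext_loc _ (fun y => th y * z y / th y)).
- apply (locally_open in_open01 _ (open_and _ _ (open_gt 0) (open_lt 1))); [|exact Hx].
  intros y Hy. change (th y * z y / th y = z y :> R). field. apply Rgt_not_eq, th_pos, Hy.
- apply (ex_derive_continuous (fun y => th y * z y / th y)), ex_derive_div.
  + apply (proj1 z_eig), Hx.
  + apply th_derivable, Hx.
  + apply Rgt_not_eq, th_pos, Hx.
Qed.

Lemma is_derive_flux x : in_open01 x -> is_derive flux x (- lam * z x).
Proof.
intros Hx. destruct z_eig as [Hzd [Hzode _]]. destruct (Hzd x Hx) as [_ [HP' HPV]].
replace (- lam * z x) with (k / 2 * Derive (Derive thz) x
  + Derive (fun y => thz y * Derive V y) x) by (specialize (Hzode x Hx); unfold thz; lra).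
apply (is_derive_plus _ (fun y => thz y * Derive V y)).
- apply is_derive_scal, Derive_correct, HP'.
- apply Derive_correct, HPV.
Qed.

Lemma is_derive_wronskian x : in_open01 x -> is_derive wronskian x 0.
Proof.
intros Hx. destruct w_eig as [Hwd [Hwode _]]. destruct (Hwd x Hx) as [Hw' Hw''].
assert (HF := is_derive_flux x Hx).
unfold wronskian. auto_derive.
- repeat split; auto. apply (proj1 z_eig), Hx. exists (- lam * z x). exact HF.
- change (Derive (fun y => flux y) x) with (Derive flux x).
  change (Derive (fun y => thz y) x) with (Derive thz x).
  change (Derive (fun y => w y) x) with (Derive w x).
  change (Derive (fun y => Derive w y) x) with (Derive (Derive w) x).
  rewrite (is_derive_unique flux x _ HF). unfold flux.
  (* W' is -z times the residual of the w-equation *)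
  unfold thz. transitivity (- z x * (- (k / 2) * th x * Derive (Derive w) x
    + th x * Derive V x * Derive w x - lam * w x)); [ring | rewrite (Hwode x Hx); ring].
Qed.

Lemma flux_bounded : exists B, forall x, 0 < x <= 1 / 2 -> Rabs (flux x) <= B.
Proof.
exists (Rabs (flux (1 / 2)) + Rabs (- lam) * Iz). intros x Hx.
apply (Rabs_le_of_is_derive_integrable flux z (- lam) 0 1); try (exact z_integrable || lra).
- intros t Ht. left. apply z_pos, Ht.
- exact z_continuous.
- exact is_derive_flux.
Qed.

Lemma thz_le_linear : exists M, 0 < M /\ at_right 0 (fun t => thz t <= M * t).
Proof.
destruct flux_bounded as [B HB].
set (K := Rabs B + Rabs (Derive V 0) + 1).
assert (HK : 0 < K) by (unfold K; assert (0 <= Rabs B) by apply Rabs_pos;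
  assert (0 <= Rabs (Derive V 0)) by apply Rabs_pos; lra).
exists (2 / k * K). split; [apply Rmult_lt_0_compat; [apply Rdiv_lt_0_compat|]; lra|].
destruct z_eig as [Hzd [_ [Hthz0 _]]].
assert (Hnear := at_right_lt 0 (1 / 2) ltac:(lra)).
assert (HDV := filter_le_within (fun t => 0 < t) _
  (filterlim_Rabs_lt (Derive V) (Derive V 0) 1 DV_continuous_0 Rlt_0_1)).
apply (filter_imp (fun t => thz t <= 2 / k * K * (t - 0))).
{ intros t Ht. rewrite Rminus_0_r in Ht. exact Ht. }
apply le_linear_at_right.
- left. apply Rmult_lt_0_compat; [apply Rdiv_lt_0_compat|]; lra.
- exact Hthz0.
- eapply filter_imp;
    [|exact (filter_and _ _ Hnear (filter_and _ _ HDV (filterlim_Rabs_lt thz 0 1 Hthz0 Rlt_0_1)))].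
  intros t [Ht [HVt Hthzt]]. split; [apply Hzd; unfold in_open01; lra|].
  rewrite Rminus_0_r in Hthzt.
  assert (HFt : Rabs (flux t) <= Rabs B) by (eapply Rle_trans; [apply HB; lra | apply RRle_abs]).
  assert (HVt' : Rabs (Derive V t) <= Rabs (Derive V 0) + 1).
  { assert (H := Rabs_triang_inv (Derive V t) (Derive V 0)). lra. }
  assert (Hprod : Rabs (thz t * Derive V t) <= Rabs (Derive V 0) + 1).
  { rewrite Rabs_mult. rewrite <- (Rmult_1_l (Rabs (Derive V 0) + 1)).
    apply Rmult_le_compat; try apply Rabs_pos; lra. }
  apply Rabs_le_between in HFt. apply Rabs_le_between in Hprod.
  unfold flux in HFt. apply (Rmult_le_reg_l (k / 2)); [lra|].
  replace (k / 2 * (2 / k * K)) with K by (field; lra). unfold K. lra.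
Qed.

Lemma w_flux_small eps : 0 < eps -> at_right 0 (fun t => Rabs (w t * flux t) < eps).
Proof.
intros Heps. destruct flux_bounded as [B HB].
assert (HB0 : 0 <= Rabs B) by apply Rabs_pos.
destruct w_eig as [_ [_ [_ [_ [Hw0 _]]]]].
assert (Hw := filterlim_Rabs_lt w 0 (eps / (Rabs B + 1)) Hw0 ltac:(apply Rdiv_lt_0_compat; lra)).
assert (Hnear := at_right_lt 0 (1 / 2) ltac:(lra)).
eapply filter_imp; [|exact (filter_and _ _ Hnear Hw)].
intros t [Ht Hwt]. rewrite Rminus_0_r in Hwt. rewrite Rabs_mult.
assert (HFt : Rabs (flux t) <= Rabs B) by (eapply Rle_trans; [apply HB; lra | apply RRle_abs]).
apply (Rle_lt_trans _ (eps / (Rabs B + 1) * Rabs B)).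
- apply Rmult_le_compat; try apply Rabs_pos; lra.
- apply (Rmult_lt_reg_r (Rabs B + 1)); [lra|].
  replace (eps / (Rabs B + 1) * Rabs B * (Rabs B + 1)) with (eps * Rabs B) by (field; lra).
  nra.
Qed.

Lemma wronskian_const x : in_open01 x -> wronskian x = wronskian (1 / 2).
Proof.
intros Hx. apply (is_derive_0_const wronskian 0 1); [exact is_derive_wronskian | exact Hx | lra].
Qed.

Lemma wronskian_eq_0 x : in_open01 x -> wronskian x = 0.
Proof.
intros Hx. rewrite (wronskian_const x Hx). set (W := wronskian (1 / 2)).
destruct (Req_dec W 0) as [HW | HW]; [exact HW | exfalso].
(* otherwise [sgn W * w] would have [k/2 thz] times its derivative bounded below by [|W|/2]
   near 0, which is incompatible with [w -> 0] because [thz = O(t)] *)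
set (s := W / Rabs W).
assert (HWabs : 0 < Rabs W) by (apply Rabs_pos_lt, HW).
assert (Hs : Rabs s = 1) by (unfold s; rewrite Rabs_div, Rabs_Rabsolu by lra; field; lra).
assert (HsW : s * W = Rabs W).
{ unfold s. destruct (Rcase_abs W); [rewrite Rabs_left | rewrite Rabs_right]; try lra; field; lra. }
destruct thz_le_linear as [M [HM HthzM]].
destruct w_eig as [Hwd [_ [_ [_ [Hw0 _]]]]].
apply (not_filterlim_of_weighted_derive_ge (fun t => s * w t) (fun t => k / 2 * thz t)
  (Rabs W / 2) (k / 2 * M) (s * 0)); [lra | nra | | ].
- assert (HwF := w_flux_small (Rabs W / 2) ltac:(lra)).
  eapply filter_imp; [|exact (filter_and _ _ (at_right_lt 0 1 Rlt_0_1) (filter_and _ _ HthzM HwF))].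
  intros t [Ht01 [HthzMt HwFt]].
  assert (Hthzt : 0 < thz t) by (apply Rmult_lt_0_compat; [apply th_pos | apply z_pos]; exact Ht01).
  split; [apply ex_derive_scal, Hwd, Ht01|]. split; [nra|].
  rewrite Derive_scal.
  assert (HWt := wronskian_const t Ht01). fold W in HWt. unfold wronskian in HWt.
  replace (k / 2 * thz t * (s * Derive w t)) with (s * W + s * (w t * flux t))
    by (rewrite <- HWt; ring).
  assert (Hsmall : Rabs (s * (w t * flux t)) < Rabs W / 2) by (rewrite Rabs_mult, Hs; lra).
  apply Rabs_lt_between in Hsmall. lra.
- eapply filterlim_comp; [exact Hw0 | exact (filterlim_scal_r s 0)].
Qed.

Lemma is_derive_thz_ratio x : in_open01 x ->
  is_derive (fun y => thz y / (w y * exp (- 2 * V y / k))) x 0.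
Proof.
intros Hx.
assert (Hwx := w_pos x Hx). assert (HEx := exp_pos (- 2 * V x / k)).
assert (HW := wronskian_eq_0 x Hx). unfold wronskian, flux in HW.
auto_derive.
- repeat split.
  + apply (proj1 z_eig), Hx.
  + apply (proj1 w_eig), Hx.
  + apply V_derivable.
  + apply Rgt_not_eq, Rmult_lt_0_compat; lra.
- change (Derive (fun y => thz y) x) with (Derive thz x).
  change (Derive (fun y => w y) x) with (Derive w x).
  change (Derive (fun y => V y) x) with (Derive V x).
  change (exp (-2 * V x / k)) with (exp (-2 * V x * / k)) in HEx.
  set (E := exp (-2 * V x * / k)) in *.
  transitivity (2 / k * (w x * (k / 2 * Derive thz x + thz x * Derive V x)
    - k / 2 * thz x * Derive w x) / (w x * w x * E)).
  + field. repeat split; lra.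
  + replace (w x * (k / 2 * Derive thz x + thz x * Derive V x) - k / 2 * thz x * Derive w x)
      with 0 by lra.
    field. repeat split; lra.
Qed.

Lemma thz_proportional : exists c, 0 < c /\
  forall x, in_open01 x -> thz x = c * (w x * exp (- 2 * V x / k)).
Proof.
assert (Hhalf : in_open01 (1 / 2)) by (unfold in_open01; lra).
set (g := fun y => thz y / (w y * exp (- 2 * V y / k))).
exists (g (1 / 2)). split.
- apply Rdiv_lt_0_compat.
  + apply Rmult_lt_0_compat; [apply th_pos | apply z_pos]; exact Hhalf.
  + apply Rmult_lt_0_compat; [apply w_pos, Hhalf | apply exp_pos].
- intros x Hx.
  rewrite <- (is_derive_0_const g 0 1 is_derive_thz_ratio x (1 / 2) Hx Hhalf).
  unfold g. field. split; [apply Rgt_not_eq, exp_pos | apply Rgt_not_eq, w_pos, Hx].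
Qed.

End CharacteristicTriple.

Theorem lemma9 (k : R) (V th : R -> R) (lam : R) (w z : R -> R) :
  0 < k ->
  smooth V -> smooth th ->
  (forall x, in_open01 x -> 0 < th x) ->
  th 0 = 0 -> th 1 = 0 ->
  0 < Derive th 0 -> Derive th 1 < 0 ->
  char_triple k V th lam w z ->
  exists C : R,
    is_RInt_gen (fun x => (w x) ^ 2 * exp (- 2 * V x / k) / th x)
      (at_right 0) (at_left 1) C /\
    0 < C /\
    forall x, in_open01 x ->
      w x * z x = / C * ((w x) ^ 2 * exp (- 2 * V x / k) / th x).
Proof.
intros Hk HV Hth Hthpos _ _ _ _ [Hw [Hz [Hpos [_ [_ [Hzint Hwzint]]]]]].
destruct (thz_proportional k V th lam 1 w z Hk (fun x => HV 1%nat x)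
  (ex_derive_continuous (Derive V) 0 (HV 2%nat 0)) (fun x _ => Hth 1%nat x) Hthpos Hw Hz
  (fun x Hx => proj1 (Hpos x Hx)) (fun x Hx => proj2 (Hpos x Hx)) Hzint) as [c [Hc Hthz]].
assert (Hwz : forall x, in_open01 x ->
  w x * z x = c * ((w x) ^ 2 * exp (- 2 * V x / k) / th x)).
{ intros x Hx. assert (Hthx := Hthpos x Hx).
  replace (z x) with (thz th z x / th x) by (unfold thz; field; lra).
  rewrite (Hthz x Hx). field. lra. }
exists (/ c). split; [|split].
- rewrite <- (Rmult_1_l (/ c)).
  apply (is_RInt_gen_ext_scal (fun x => w x * z x)); [lra | lra | exact Hwz | exact Hwzint].
- apply Rinv_0_lt_compat, Hc.
- intros x Hx. rewrite Rinv_inv. apply Hwz, Hx.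
Qed.
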